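(* Let $p\ge 2$, $1\le r\le p-1$, $n\ge 2$, $h=1/n$, let $b_1,b_2$ be the first two B-splines of $\mathcal S(p,r,h)$, and let $\widetilde\alpha,\widetilde\beta\in\mathcal S(\widetilde p,\widetilde r,h)$ be splines (for some $\widetilde p\ge 1$, $0\le \widetilde r<\widetilde p$) with $\widetilde\alpha(v)\neq 0$ for all $v\in[0,1]$. For $b^+\in\mathcal S^+:=\mathcal S(p,p-1,h)$ and $b^-\in\mathcal S^-:=\mathcal S(p-1,p-2,h)$ define $$f[b^+,b^-](u,v)=b^+(v)\big(b_1(u)+b_2(u)\big)+\big(\widetilde\alpha(v)b^-(v)+\widetilde\beta(v)(b^+)'(v)\big)\tfrac hp\,b_2(u),\qquad (u,v)\in[0,1]^2,$$ and the approximate normal derivative at $u=0$, $$D_{\widetilde{\mathbf n}}f(v):=\widetilde a_1(v)\,\partial_u f(0,v)+\widetilde a_2(v)\,\partial_v f(0,v),\qquad \widetilde a_1=-\tfrac1{\widetilde\alpha},\ \widetilde a_2=\tfrac{\widetilde\beta}{\widetilde\alpha}.$$ Then for all $b^+\in\mathcal S^+$, $b^-\in\mathcal S^-$: (i) $f[b^+,b^-](0,v)=b^+(v)$ and $D_{\widetilde{\mathbf n}}f[b^+,b^-](v)=-b^-(v)$ for all $v\in[0,1]$. In particular $f[b_j^+,0]$ has trace $b_j^+$ and vanishing approximate normal derivative, and $f[0,b_j^-]$ has trace $0$ and approximate normal derivative $-b_j^-$. (ii) Let $\{b_j^+\}_{j=1}^{N_+}$ and $\{b_j^-\}_{j=1}^{N_-}$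 be the B-spline bases of $\mathcal S^+$ and $\mathcal S^-$. If $f=f[b_j^+,0]$ with $4\le j\le N_+-4$, or $f=f[0,b_j^-]$ with $3\le j\le N_--3$, then at each of the four corners $(0,0),(1,0),(1,1),(0,1)$ of $[0,1]^2$ the value, the gradient and the Hessian of $f$ (taken as limits from inside $[0,1]^2$) vanish. Consequently, for a regular patch parametrization $\mathbf F$ and $\varphi_h=f\circ\mathbf F^{-1}$, the value, gradient and Hessian of $\varphi_h$ vanish at all four patch vertices $\mathbf F(0,0),\mathbf F(1,0),\mathbf F(1,1),\mathbf F(0,1)$.
   Context: For positive integers $p$, $r<p$, $n$ and $h=1/n$, $\mathcal S(p,r,h)$ denotes the univariate spline space on $[0,1]$ of degree $p$ with the open uniform knot vector in which $0$ and $1$ have multiplicity $p+1$ and each interior knot $ih$, $i=1,\dots,n-1$, has multiplicity $p-r$; its B-spline basis is ordered along the knot vector. If $\varphi=f\circ\mathbf F^{-1}$ for a regular parametrization $\mathbf F$ of a patch whose edge $u=0$ carries the approximate normal vector $\widetilde{\mathbf n}\circ\mathbf F(0,v)=\widetilde a_1(v)\partial_u\mathbf F(0,v)+\widetilde a_2(v)\partial_v\mathbf F(0,v)$, then $(\widetilde{\mathbf n}\cdot\nabla_{\mathbf x}\varphi)\circ\mathbf F(0,v)=D_{\widetilde{\mathbf n}}f(v)$. (In the paper $\widetilde\alpha,\widetilde\beta$ are spline approximations of the gluing data $\alpha(v)=\det(\partial_u\mathbf F(0,v),\partial_v\mathbf F(0,v))$, $\beta(v)=\partial_u\mathbf F(0,v)\cdot\partial_v\mathbf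 F(0,v)/\|\partial_v\mathbf F(0,v)\|^2$; the claim holds for any such splines with $\widetilde\alpha$ nonvanishing.) *)

From Stdlib Require Import Reals.
From Coquelicot Require Import Coquelicot.
Open Scope R_scope.

(* a / b with the B-spline convention 0/0 := 0 (any ./0 := 0) *)
Definition frac (a b : R) : R := if Req_EM_T b 0 then 0 else a / b.

(* Open uniform knot vector of S(p,r,h), h = 1/n, 0-indexed:
   t_0 = ... = t_p = 0, each interior knot i*h (i=1..n-1) repeated p-r times,
   then 1 repeated p+1 times (we continue it by 1 forever; harmless). *)
Definition knot (p r n : nat) (k : nat) : R :=
  if Nat.leb k p then 0
  else if Nat.ltb k (p + 1 + (n - 1) * (p - r))%nat then
    INR ((k - (p + 1)) / (p - r) + 1)%nat / INR n
  else 1.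

(* index of the last nonempty knot span [t_L, t_{L+1}) = [(n-1)h, 1) *)
Definition last_span (p r n : nat) : nat := (p + (n - 1) * (p - r))%nat.

(* Degree 0: indicator of [t_i, t_{i+1}), except that
   the first nonempty span (index [first]) is extended to the left and the last
   nonempty span (index [last]) to the right (so it is closed at 1).  On [0,1]
   this gives exactly the usual B-splines (with value at 1 taken from the left);
   outside [0,1] every B-spline is the polynomial continuation of its first/last
   piece, so that derivatives at 0 and 1 are the one-sided ones from inside. *)
Fixpoint cdb (t : nat -> R) (first last : nat) (q i : nat) (x : R) : R :=
  match q with
  | O =>
      if Rlt_dec (t i) (t (S i)) then
        let lo := if Nat.eq_dec i first then true
                  else if Rle_dec (t i) x then true else false in
        let hi := if Nat.eq_dec i last then true
                  else if Rlt_dec x (t (S i)) then true else false in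
        if andb lo hi then 1 else 0
      else 0
  | S q' =>
      frac (x - t i) (t (i + S q')%nat - t i) * cdb t first last q' i x
      + frac (t (i + S q' + 1)%nat - x) (t (i + S q' + 1)%nat - t (S i))
          * cdb t first last q' (S i) x
  end.

Definition bspline (p r n i : nat) (x : R) : R :=
  cdb (knot p r n) p (last_span p r n) p i x.

Definition dimS (p r n : nat) : nat := (p + 1 + (n - 1) * (p - r))%nat.

(* 1-indexed B-spline b_j, j = 1..dimS, as in the paper *)
Definition Bsp (p r n j : nat) : R -> R := bspline p r n (pred j).

Fixpoint rsum (N : nat) (F : nat -> R) : R :=
  match N with O => 0 | S k => rsum k F + F k end.

Definition inS (p r n : nat) (g : R -> R) : Prop :=
  exists c : nat -> R, forall x, g x = rsum (dimS p r n) (fun i => c i * bspline p r n i x).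

Definition hmesh (n : nat) : R := / INR n.

Definition fpatch (p r n : nat) (alpha beta bp bm : R -> R) (u v : R) : R :=
  bp v * (Bsp p r n 1 u + Bsp p r n 2 u)
  + (alpha v * bm v + beta v * Derive bp v) * (hmesh n / INR p) * Bsp p r n 2 u.

Definition d1 (g : R -> R -> R) (u v : R) : R := Derive (fun s => g s v) u.
Definition d2 (g : R -> R -> R) (u v : R) : R := Derive (fun s => g u s) v.

Definition Dnormal (alpha beta : R -> R) (f : R -> R -> R) (v : R) : R :=
  (- (1 / alpha v)) * d1 f 0 v + (beta v / alpha v) * d2 f 0 v.

Definition lim_inside (S : R -> R -> Prop) (g : R -> R -> R) (c1 c2 l : R) : Prop :=
  forall eps, 0 < eps -> exists delta, 0 < delta /\
    forall u v, S u v -> Rabs (u - c1) < delta -> Rabs (v - c2) < delta ->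
      Rabs (g u v - l) < eps.

Definition vanish2_inside (S : R -> R -> Prop) (g : R -> R -> R) (c1 c2 : R) : Prop :=
  (exists delta, 0 < delta /\
    forall u v, S u v -> Rabs (u - c1) < delta -> Rabs (v - c2) < delta ->
      ex_derive (fun s => g s v) u /\ ex_derive (fun s => g u s) v /\
      ex_derive (fun s => d1 g s v) u /\ ex_derive (fun s => d1 g u s) v /\
      ex_derive (fun s => d2 g s v) u /\ ex_derive (fun s => d2 g u s) v)
  /\ lim_inside S g c1 c2 0
  /\ lim_inside S (d1 g) c1 c2 0 /\ lim_inside S (d2 g) c1 c2 0
  /\ lim_inside S (d1 (d1 g)) c1 c2 0 /\ lim_inside S (d2 (d1 g)) c1 c2 0
  /\ lim_inside S (d1 (d2 g)) c1 c2 0 /\ lim_inside S (d2 (d2 g)) c1 c2 0.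

Definition open_sq (u v : R) : Prop := 0 < u < 1 /\ 0 < v < 1.
Definition closed_sq (u v : R) : Prop := 0 <= u <= 1 /\ 0 <= v <= 1.

Definition at_corners (P : R -> R -> Prop) : Prop :=
  P 0 0 /\ P 1 0 /\ P 1 1 /\ P 0 1.

Definition open2 (U : R -> R -> Prop) : Prop :=
  forall x y, U x y -> exists e, 0 < e /\
    forall x' y', Rabs (x' - x) < e -> Rabs (y' - y) < e -> U x' y'.

Definition cont2_at (g : R -> R -> R) (x y : R) : Prop :=
  forall eps, 0 < eps -> exists d, 0 < d /\
    forall x' y', Rabs (x' - x) < d -> Rabs (y' - y) < d ->
      Rabs (g x' y' - g x y) < eps.

Definition C2_on (U : R -> R -> Prop) (g : R -> R -> R) : Prop :=
  forall x y, U x y ->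
    ex_derive (fun s => g s y) x /\ ex_derive (fun s => g x s) y /\
    ex_derive (fun s => d1 g s y) x /\ ex_derive (fun s => d1 g x s) y /\
    ex_derive (fun s => d2 g s y) x /\ ex_derive (fun s => d2 g x s) y /\
    cont2_at g x y /\ cont2_at (d1 g) x y /\ cont2_at (d2 g) x y /\
    cont2_at (d1 (d1 g)) x y /\ cont2_at (d2 (d1 g)) x y /\
    cont2_at (d1 (d2 g)) x y /\ cont2_at (d2 (d2 g)) x y.

Definition regular_param (F1 F2 G1 G2 : R -> R -> R) : Prop :=
  (exists U, open2 U /\ (forall u v, closed_sq u v -> U u v) /\ C2_on U F1 /\ C2_on U F2)
  /\ (exists V, open2 V /\ (forall u v, closed_sq u v -> V (F1 u v) (F2 u v))
        /\ C2_on V G1 /\ C2_on V G2)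
  /\ (forall u v, closed_sq u v -> G1 (F1 u v) (F2 u v) = u /\ G2 (F1 u v) (F2 u v) = v).

Definition phys_inside (F1 F2 : R -> R -> R) (x y : R) : Prop :=
  exists u v, open_sq u v /\ x = F1 u v /\ y = F2 u v.

From Pilot Require Import Defs.
From Stdlib Require Import Reals Lra Lia Arith FunctionalExtensionality.
From Coquelicot Require Import Coquelicot.
Open Scope R_scope.

(* Part (i) is a computation at u = 0: b_1(0) = 1, b_2(0) = 0, b_1'(0) = -p/h and
   b_2'(0) = p/h, so the trace of f is b^+ and its u-derivative is the coefficient
   alpha b^- + beta (b^+)' of (h/p) b_2, which D_n turns into -b^-.

   For part (ii), within distance h of an end point every B-spline is a polynomial, and
   the i-th one (counted from that end, from 0) carries the factor (x - c)^i.  Near each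
   corner the bump functions are therefore of the form A(u) P(v) + B(u) Q(v) with
   polynomials B, P, Q vanishing to orders 1, 3, 2 (P is b_j^+ or 0, Q involves (b_j^+)'
   or b_j^-).  Such a function is C^2 and flat of order 3 at the corner, and flatness of
   order 3 is preserved under composition with the C^2 map F^{-1}. *)

(** * Polynomial functions *)

Lemma is_derive_Rconst (c x : R) : is_derive (fun _ => c) x 0.
Proof. apply (@is_derive_const R_AbsRing R_NormedModule). Qed.

Lemma is_derive_Rid (x : R) : is_derive (fun t => t) x 1.
Proof. apply (@is_derive_id R_AbsRing). Qed.

Lemma is_derive_Rplus (f g : R -> R) x a b :
  is_derive f x a -> is_derive g x b -> is_derive (fun t => f t + g t) x (a + b).
Proof. intros. apply (@is_derive_plus R_AbsRing R_NormedModule); auto. Qed.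

Lemma is_derive_Rmult (f g : R -> R) x a b :
  is_derive f x a -> is_derive g x b -> is_derive (fun t => f t * g t) x (a * g x + f x * b).
Proof. intros. apply (@is_derive_mult R_AbsRing); auto. intros; apply Rmult_comm. Qed.

Lemma ex_derive_Rplus (f g : R -> R) x :
  ex_derive f x -> ex_derive g x -> ex_derive (fun t => f t + g t) x.
Proof. intros. apply (@ex_derive_plus R_AbsRing R_NormedModule); auto. Qed.

Inductive is_poly : (R -> R) -> Prop :=
  | poly_const c : is_poly (fun _ => c)
  | poly_id : is_poly (fun x => x)
  | poly_plus f g : is_poly f -> is_poly g -> is_poly (fun x => f x + g x)
  | poly_mult f g : is_poly f -> is_poly g -> is_poly (fun x => f x * g x).

Lemma poly_ext f g : is_poly f -> (forall x, f x = g x) -> is_poly g.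
Proof. intros Hf E. replace g with f; auto. apply functional_extensionality; auto. Qed.

Lemma poly_pow f k : is_poly f -> is_poly (fun x => f x ^ k).
Proof.
  intros Hf. induction k; simpl.
  - apply poly_const.
  - apply (poly_mult f (fun x => f x ^ k)); auto.
Qed.

Lemma poly_affine a b : is_poly (fun x => a * x + b).
Proof.
  apply (poly_plus (fun x => a * x) (fun _ => b)); [|apply poly_const].
  apply (poly_mult (fun _ => a)); [apply poly_const | apply poly_id].
Qed.

Lemma poly_scal a f : is_poly f -> is_poly (fun x => a * f x).
Proof. apply (poly_mult (fun _ => a)), poly_const. Qed.

Lemma poly_shift_pow_mult c k g : is_poly g -> is_poly (fun x => (x - c) ^ k * g x).
Proof.
  intros Hg. apply poly_mult; auto. apply poly_pow.
  apply (poly_ext (fun x => 1 * x + - c)); [apply poly_affine | intros; ring].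
Qed.

Lemma poly_has_derive f : is_poly f -> exists f', is_poly f' /\ forall x, is_derive f x (f' x).
Proof.
  induction 1 as [c | | f g _ [f' [Pf Df]] _ [g' [Pg Dg]] | f g Hf [f' [Pf Df]] Hg [g' [Pg Dg]]].
  - exists (fun _ => 0). split; [apply poly_const | intros; apply is_derive_Rconst].
  - exists (fun _ => 1). split; [apply poly_const | intros; apply is_derive_Rid].
  - exists (fun x => f' x + g' x). split; [apply poly_plus; auto |].
    intros x. apply is_derive_Rplus; auto.
  - exists (fun x => f' x * g x + f x * g' x). split; [apply poly_plus; apply poly_mult; auto |].
    intros x. apply is_derive_Rmult; auto.
Qed.

Lemma poly_is_derive f x : is_poly f -> is_derive f x (Derive f x).
Proof.
  intros Hf. destruct (poly_has_derive f Hf) as [f' [_ Df]].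
  rewrite (is_derive_unique _ _ _ (Df x)). auto.
Qed.

Lemma poly_ex_derive f x : is_poly f -> ex_derive f x.
Proof. intros Hf. eexists. apply poly_is_derive, Hf. Qed.

Lemma poly_Derive f : is_poly f -> is_poly (Derive f).
Proof.
  intros Hf. destruct (poly_has_derive f Hf) as [f' [Pf Df]]. apply (poly_ext f'); auto.
  intros x. rewrite (is_derive_unique _ _ _ (Df x)). auto.
Qed.

Lemma poly_continuous f x : is_poly f -> forall eps, 0 < eps -> exists d, 0 < d /\
  forall y, Rabs (y - x) < d -> Rabs (f y - f x) < eps.
Proof.
  intros Hf eps Heps.
  assert (C : continuity_pt f x).
  { apply continuity_pt_filterlim, (@ex_derive_continuous R_AbsRing R_NormedModule).
    apply poly_ex_derive, Hf. }
  destruct (continuity_pt_locally f x) as [L _]. destruct (L C (mkposreal eps Heps)) as [d Hd].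
  exists d. split; [apply cond_pos | intros y Hy; apply Hd, Hy].
Qed.

Fixpoint zero_of_order (m : nat) (a : R -> R) (c : R) : Prop :=
  match m with O => True | S m' => a c = 0 /\ zero_of_order m' (Derive a) c end.

Lemma Derive_shift_pow_mult c k g : is_poly g -> (1 <= k)%nat ->
  Derive (fun x => (x - c) ^ k * g x)
  = (fun x => (x - c) ^ (k - 1) * (INR k * g x + (x - c) * Derive g x)).
Proof.
  intros Hg Hk. apply functional_extensionality. intros x. apply is_derive_unique.
  assert (D : is_derive (fun x => x - c) x 1) by (auto_derive; auto; ring).
  replace ((x - c) ^ (k - 1) * (INR k * g x + (x - c) * Derive g x)) with
    (INR k * 1 * (x - c) ^ pred k * g x + (x - c) ^ k * Derive g x).
  - apply is_derive_Rmult; [apply (is_derive_pow (fun x => x - c)), D | apply poly_is_derive, Hg].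
  - destruct k as [|k]; [lia |]. simpl. replace (k - 0)%nat with k by lia. ring.
Qed.

Lemma zero_of_order_shift_pow m : forall k c g, is_poly g -> (m <= k)%nat ->
  zero_of_order m (fun x => (x - c) ^ k * g x) c.
Proof.
  induction m as [|m IH]; intros k c g Hg Hm; simpl; auto.
  split; [rewrite Rminus_eq_0, pow_i by lia; ring |].
  rewrite Derive_shift_pow_mult by (auto; lia). apply IH; [| lia].
  apply poly_plus; [apply poly_scal, Hg |].
  apply (poly_ext (fun x => (x - c) ^ 1 * Derive g x)); [| intros; ring].
  apply poly_shift_pow_mult, poly_Derive, Hg.
Qed.

(** * Flatness of functions of two variables *)

Lemma Rabs_mult_close a0 b0 a b eta eps :
  Rabs (a - a0) < eta -> Rabs (b - b0) < eta -> eta <= 1 ->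
  eta * (1 + Rabs a0 + Rabs b0) <= eps -> Rabs (a * b - a0 * b0) < eps.
Proof.
  intros Ha Hb Heta Hsum.
  replace (a * b - a0 * b0) with ((a - a0) * (b - b0) + (a - a0) * b0 + a0 * (b - b0)) by ring.
  pose proof (Rabs_triang ((a - a0) * (b - b0) + (a - a0) * b0) (a0 * (b - b0))).
  pose proof (Rabs_triang ((a - a0) * (b - b0)) ((a - a0) * b0)).
  rewrite !Rabs_mult in *.
  pose proof (Rabs_pos (a - a0)). pose proof (Rabs_pos (b - b0)).
  pose proof (Rabs_pos a0). pose proof (Rabs_pos b0).
  nra.
Qed.

Lemma cont2_const c x y : cont2_at (fun _ _ => c) x y.
Proof. intros eps Heps. exists 1. split; [lra |]. intros. rewrite Rminus_eq_0, Rabs_R0; auto. Qed.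

Lemma cont2_fst x y : cont2_at (fun a _ => a) x y.
Proof. intros eps Heps. exists eps. split; auto. Qed.

Lemma cont2_snd x y : cont2_at (fun _ b => b) x y.
Proof. intros eps Heps. exists eps. split; auto. Qed.

Lemma cont2_plus g h x y :
  cont2_at g x y -> cont2_at h x y -> cont2_at (fun a b => g a b + h a b) x y.
Proof.
  intros Cg Ch eps Heps.
  destruct (Cg (eps / 2)) as [dg [Hdg Hg]]; [lra |].
  destruct (Ch (eps / 2)) as [dh [Hdh Hh]]; [lra |].
  exists (Rmin dg dh). split; [apply Rmin_glb_lt; auto |].
  intros x' y' Hx Hy. pose proof (Rmin_l dg dh). pose proof (Rmin_r dg dh).
  replace (g x' y' + h x' y' - (g x y + h x y))
    with ((g x' y' - g x y) + (h x' y' - h x y)) by ring.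
  pose proof (Rabs_triang (g x' y' - g x y) (h x' y' - h x y)).
  assert (Rabs (g x' y' - g x y) < eps / 2) by (apply Hg; lra).
  assert (Rabs (h x' y' - h x y) < eps / 2) by (apply Hh; lra).
  lra.
Qed.

Lemma cont2_mult g h x y :
  cont2_at g x y -> cont2_at h x y -> cont2_at (fun a b => g a b * h a b) x y.
Proof.
  intros Cg Ch eps Heps.
  set (K := 1 + Rabs (g x y) + Rabs (h x y)).
  assert (HK : 0 < K).
  { unfold K. pose proof (Rabs_pos (g x y)). pose proof (Rabs_pos (h x y)). lra. }
  set (eta := Rmin 1 (eps / K)).
  assert (Heta : 0 < eta) by (apply Rmin_glb_lt; [lra | apply Rdiv_lt_0_compat; auto]).
  destruct (Cg eta Heta) as [dg [Hdg Hg]]. destruct (Ch eta Heta) as [dh [Hdh Hh]].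
  exists (Rmin dg dh). split; [apply Rmin_glb_lt; auto |].
  intros x' y' Hx Hy. pose proof (Rmin_l dg dh). pose proof (Rmin_r dg dh).
  apply (Rabs_mult_close _ _ _ _ eta); [apply Hg; lra | apply Hh; lra | apply Rmin_l |].
  pose proof (Rmin_r 1 (eps / K)). fold K.
  apply Rle_trans with (eps / K * K); [apply Rmult_le_compat_r; unfold eta; lra |].
  right; field; lra.
Qed.

Lemma cont2_poly_comp a G x y : is_poly a -> cont2_at G x y -> cont2_at (fun u v => a (G u v)) x y.
Proof.
  intros Pa CG eps Heps. destruct (poly_continuous a (G x y) Pa eps Heps) as [d [Hd Ha]].
  destruct (CG d Hd) as [d' [Hd' HG]]. exists d'. split; [exact Hd' |].
  intros x' y' Hx Hy. apply Ha, HG; auto.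
Qed.

Lemma lim_inside_of_cont2 S g x0 y0 : cont2_at g x0 y0 -> g x0 y0 = 0 -> lim_inside S g x0 y0 0.
Proof.
  intros C V eps Heps. destruct (C eps Heps) as [d [Hd Hg]]. exists d. split; auto.
  intros. rewrite <- V. apply Hg; auto.
Qed.

Lemma locally_of_radius (x d : R) (P : R -> Prop) :
  0 < d -> (forall t, Rabs (t - x) < d -> P t) -> locally x P.
Proof. intros Hd H. exists (mkposreal d Hd). intros y Hy. apply H, Hy. Qed.

Lemma locally_in_ball c d x : Rabs (x - c) < d -> locally x (fun t => Rabs (t - c) < d).
Proof.
  intros Hx. apply (locally_of_radius x (d - Rabs (x - c))); [lra |].
  intros t Ht. replace (t - c) with ((t - x) + (x - c)) by ring.
  pose proof (Rabs_triang (t - x) (x - c)). lra.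
Qed.

Definition inbox (x0 y0 e x y : R) : Prop := Rabs (x - x0) < e /\ Rabs (y - y0) < e.

Section FlatOnBox.

Variables x0 y0 e : R.
Hypothesis He : 0 < e.

(* [flat k m g]: on the box of radius e about (x0, y0), the partial derivatives of g
   up to order k exist and are continuous, and those of order < m vanish at (x0, y0). *)
Fixpoint flat (k m : nat) (g : R -> R -> R) : Prop :=
  (forall x y, inbox x0 y0 e x y -> cont2_at g x y) /\ ((1 <= m)%nat -> g x0 y0 = 0) /\
  match k with
  | O => True
  | S k' =>
      (forall x y, inbox x0 y0 e x y ->
         ex_derive (fun s => g s y) x /\ ex_derive (fun s => g x s) y)
      /\ flat k' (m - 1) (Defs.d1 g) /\ flat k' (m - 1) (Defs.d2 g)
  end.

Lemma inbox_center : inbox x0 y0 e x0 y0.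
Proof. split; rewrite Rminus_eq_0, Rabs_R0; exact He. Qed.

Lemma inbox_locally_fst x y : inbox x0 y0 e x y -> locally x (fun s => inbox x0 y0 e s y).
Proof.
  intros [Hx Hy]. apply (filter_imp (fun s => Rabs (s - x0) < e)); [split; auto |].
  apply locally_in_ball, Hx.
Qed.

Lemma inbox_locally_snd x y : inbox x0 y0 e x y -> locally y (fun s => inbox x0 y0 e x s).
Proof.
  intros [Hx Hy]. apply (filter_imp (fun s => Rabs (s - y0) < e)); [split; auto |].
  apply locally_in_ball, Hy.
Qed.

Section BoxExtensionality.

Variables g g' : R -> R -> R.
Hypothesis Egg' : forall x y, inbox x0 y0 e x y -> g x y = g' x y.

Lemma cont2_ext_box x y : inbox x0 y0 e x y -> cont2_at g x y -> cont2_at g' x y.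
Proof.
  intros [Bx By] C eps Heps. destruct (C eps Heps) as [d [Hd Hg]].
  set (d' := Rmin d (Rmin (e - Rabs (x - x0)) (e - Rabs (y - y0)))).
  assert (Hd' : 0 < d') by (apply Rmin_glb_lt; [| apply Rmin_glb_lt]; lra).
  pose proof (Rmin_l d (Rmin (e - Rabs (x - x0)) (e - Rabs (y - y0)))).
  pose proof (Rmin_r d (Rmin (e - Rabs (x - x0)) (e - Rabs (y - y0)))).
  pose proof (Rmin_l (e - Rabs (x - x0)) (e - Rabs (y - y0))).
  pose proof (Rmin_r (e - Rabs (x - x0)) (e - Rabs (y - y0))).
  exists d'. split; auto. intros x' y' Hx Hy.
  pose proof (Rabs_triang (x' - x) (x - x0)). pose proof (Rabs_triang (y' - y) (y - y0)).
  rewrite <- !Egg'; [apply Hg; unfold d' in *; lra | split; auto |].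
  split.
  - replace (x' - x0) with ((x' - x) + (x - x0)) by ring. unfold d' in *; lra.
  - replace (y' - y0) with ((y' - y) + (y - y0)) by ring. unfold d' in *; lra.
Qed.

Lemma d1_ext_box x y : inbox x0 y0 e x y -> Defs.d1 g x y = Defs.d1 g' x y.
Proof.
  intros B. apply Derive_ext_loc, (filter_imp _ _ (fun s => Egg' s y)), inbox_locally_fst, B.
Qed.

Lemma d2_ext_box x y : inbox x0 y0 e x y -> Defs.d2 g x y = Defs.d2 g' x y.
Proof.
  intros B. apply Derive_ext_loc, (filter_imp _ _ (fun s => Egg' x s)), inbox_locally_snd, B.
Qed.

End BoxExtensionality.

Lemma flat_ext k : forall m g g', (forall x y, inbox x0 y0 e x y -> g x y = g' x y) ->
  flat k m g -> flat k m g'.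
Proof.
  induction k as [|k IH]; intros m g g' E [Cg [Vg Fg]].
  - split; [intros; apply (cont2_ext_box g); auto |]. split; auto.
    intros; rewrite <- E; [auto | apply inbox_center].
  - destruct Fg as [Dg [F1 F2]].
    split; [intros; apply (cont2_ext_box g); auto |].
    split; [intros; rewrite <- E; [auto | apply inbox_center] |].
    split; [| split].
    + intros x y B. destruct (Dg x y B) as [Dx Dy]. split.
      * apply (ex_derive_ext_loc (fun s => g s y)); auto.
        apply (filter_imp _ _ (fun s => E s y)), inbox_locally_fst, B.
      * apply (ex_derive_ext_loc (fun s => g x s)); auto.
        apply (filter_imp _ _ (fun s => E x s)), inbox_locally_snd, B.
    + apply (IH _ (Defs.d1 g)); auto. intros; apply d1_ext_box; auto.
    + apply (IH _ (Defs.d2 g)); auto. intros; apply d2_ext_box; auto.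
Qed.

Lemma flat_weaken k : forall m m' g, (m' <= m)%nat -> flat k m g -> flat k m' g.
Proof.
  induction k as [|k IH]; intros m m' g Hm [Cg [Vg Fg]].
  - split; auto. split; auto. intros; apply Vg; lia.
  - destruct Fg as [Dg [F1 F2]]. split; auto. split; [intros; apply Vg; lia |].
    split; auto. split; apply (IH (m - 1)%nat); auto; lia.
Qed.

Lemma flat_pred_smoothness k : forall m g, flat (S k) m g -> flat k m g.
Proof.
  induction k as [|k IH]; intros m g [Cg [Vg [Dg [F1 F2]]]].
  - split; auto.
  - do 3 (split; [assumption |]). split; apply IH; assumption.
Qed.

Lemma flat_const k : forall m c, ((1 <= m)%nat -> c = 0) -> flat k m (fun _ _ => c).
Proof.
  induction k as [|k IH]; intros m c Hc.
  - split; [intros; apply cont2_const | split; auto].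
  - split; [intros; apply cont2_const | split; auto]. split.
    + intros; split; apply ex_derive_const.
    + split; apply (flat_ext k (m - 1)%nat (fun _ _ => 0)); auto;
        intros; unfold Defs.d1, Defs.d2; rewrite Derive_const; auto.
Qed.

Lemma flat_plus k : forall m g h, flat k m g -> flat k m h -> flat k m (fun a b => g a b + h a b).
Proof.
  induction k as [|k IH]; intros m g h [Cg [Vg Fg]] [Ch [Vh Fh]].
  - split; [intros; apply cont2_plus; auto |]. split; auto. intros; rewrite Vg, Vh; auto; ring.
  - destruct Fg as [Dg [Fg1 Fg2]]. destruct Fh as [Dh [Fh1 Fh2]].
    split; [intros; apply cont2_plus; auto |].
    split; [intros; rewrite Vg, Vh; auto; ring |].
    split; [| split].
    + intros x y B. destruct (Dg x y B), (Dh x y B). split; apply ex_derive_Rplus; auto.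
    + apply (flat_ext k (m - 1)%nat (fun a b => Defs.d1 g a b + Defs.d1 h a b)); auto.
      intros x y B. destruct (Dg x y B), (Dh x y B). unfold Defs.d1. rewrite Derive_plus; auto.
    + apply (flat_ext k (m - 1)%nat (fun a b => Defs.d2 g a b + Defs.d2 h a b)); auto.
      intros x y B. destruct (Dg x y B), (Dh x y B). unfold Defs.d2. rewrite Derive_plus; auto.
Qed.

Lemma flat_mult k : forall m1 m2 g h, flat k m1 g -> flat k m2 h ->
  flat k (m1 + m2) (fun a b => g a b * h a b).
Proof.
  induction k as [|k IH]; intros m1 m2 g h Hg Hh.
  - destruct Hg as [Cg [Vg _]], Hh as [Ch [Vh _]].
    split; [intros; apply cont2_mult; auto |]. split; auto.
    intros. destruct m1; [rewrite Vh by lia | rewrite Vg by lia]; ring.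
  - pose proof (flat_pred_smoothness k m1 g Hg) as Hg0.
    pose proof (flat_pred_smoothness k m2 h Hh) as Hh0.
    destruct Hg as [Cg [Vg [Dg [Fg1 Fg2]]]], Hh as [Ch [Vh [Dh [Fh1 Fh2]]]].
    assert (Leibniz : forall g' h', flat k (m1 - 1) g' -> flat k (m2 - 1) h' ->
      flat k (m1 + m2 - 1) (fun a b => g' a b * h a b + g a b * h' a b)).
    { intros g' h' Hg' Hh'. apply flat_plus.
      - apply (flat_weaken k (m1 - 1 + m2)); [lia | apply IH; auto].
      - apply (flat_weaken k (m1 + (m2 - 1))); [lia | apply IH; auto]. }
    split; [intros; apply cont2_mult; auto |].
    split; [intros; destruct m1; [rewrite Vh by lia | rewrite Vg by lia]; ring |].
    split; [| split].
    + intros x y B. destruct (Dg x y B), (Dh x y B). split; apply ex_derive_mult; auto.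
    + apply (flat_ext k _ (fun a b => Defs.d1 g a b * h a b + g a b * Defs.d1 h a b)); auto.
      intros x y B. destruct (Dg x y B), (Dh x y B). unfold Defs.d1. rewrite Derive_mult; auto.
    + apply (flat_ext k _ (fun a b => Defs.d2 g a b * h a b + g a b * Defs.d2 h a b)); auto.
      intros x y B. destruct (Dg x y B), (Dh x y B). unfold Defs.d2. rewrite Derive_mult; auto.
Qed.

Lemma flat_poly_comp k : forall m a G, is_poly a -> zero_of_order m a (G x0 y0) ->
  flat k 0 G -> flat k m (fun u v => a (G u v)).
Proof.
  induction k as [|k IH]; intros m a G Pa Za HG.
  - destruct HG as [CG _]. split; [intros; apply cont2_poly_comp; auto |]. split; auto.
    intros. destruct m; [lia | apply Za].
  - pose proof (flat_pred_smoothness k 0 G HG) as HG0.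
    destruct HG as [CG [_ [DG [FG1 FG2]]]].
    assert (Za' : zero_of_order (m - 1) (Derive a) (G x0 y0)).
    { destruct m; simpl in *; [auto | replace (m - 0)%nat with m by lia; tauto]. }
    assert (Chain : forall G', flat k 0 G' ->
      flat k (m - 1) (fun u v => Derive a (G u v) * G' u v)).
    { intros G' HG'. replace (m - 1)%nat with (m - 1 + 0)%nat by lia.
      apply flat_mult; auto. apply IH; auto. apply poly_Derive, Pa. }
    split; [intros; apply cont2_poly_comp; auto |].
    split; [intros; destruct m; [lia | apply Za] |].
    split; [| split].
    + intros x y B. destruct (DG x y B).
      split; apply ex_derive_comp; auto; apply poly_ex_derive, Pa.
    + apply (flat_ext k _ (fun u v => Derive a (G u v) * Defs.d1 G u v)); auto.
      intros x y B. destruct (DG x y B). unfold Defs.d1.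
      rewrite (Derive_comp a (fun s => G s y) x); [ring | apply poly_ex_derive, Pa | auto].
    + apply (flat_ext k _ (fun u v => Derive a (G u v) * Defs.d2 G u v)); auto.
      intros x y B. destruct (DG x y B). unfold Defs.d2.
      rewrite (Derive_comp a (fun s => G x s) y); [ring | apply poly_ex_derive, Pa | auto].
Qed.

Lemma flat_fst k : flat k 0 (fun a _ => a).
Proof.
  destruct k as [|k].
  - split; [intros; apply cont2_fst | split; [intros; lia | auto]].
  - split; [intros; apply cont2_fst | split; [intros; lia |]]. split.
    + intros; split; [apply ex_derive_id | apply ex_derive_const].
    + split.
      * apply (flat_ext k 0 (fun _ _ => 1)); [| apply flat_const; intros; lia].
        intros; unfold Defs.d1; rewrite Derive_id; auto.
      * apply (flat_ext k 0 (fun _ _ => 0)); [| apply flat_const; auto].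
        intros; unfold Defs.d2; rewrite Derive_const; auto.
Qed.

Lemma flat_snd k : flat k 0 (fun _ b => b).
Proof.
  destruct k as [|k].
  - split; [intros; apply cont2_snd | split; [intros; lia | auto]].
  - split; [intros; apply cont2_snd | split; [intros; lia |]]. split.
    + intros; split; [apply ex_derive_const | apply ex_derive_id].
    + split.
      * apply (flat_ext k 0 (fun _ _ => 0)); [| apply flat_const; auto].
        intros; unfold Defs.d1; rewrite Derive_const; auto.
      * apply (flat_ext k 0 (fun _ _ => 1)); [| apply flat_const; intros; lia].
        intros; unfold Defs.d2; rewrite Derive_id; auto.
Qed.

Lemma flat_of_C2_on V G : (forall x y, inbox x0 y0 e x y -> V x y) -> C2_on V G -> flat 2 0 G.
Proof.
  intros HV HC. simpl.
  repeat split; intros; try lia;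
    destruct (HC x y (HV x y ltac:(auto))) as [? [? [? [? [? [? [? [? [? [? [? [? ?]]]]]]]]]]]];
    auto.
Qed.

Lemma vanish2_inside_of_flat S g : flat 2 3 g -> vanish2_inside S g x0 y0.
Proof.
  intros [Cg [Vg [Dg [F1 F2]]]].
  destruct F1 as [C1 [V1 [D1 [[C11 [V11 _]] [C12 [V12 _]]]]]].
  destruct F2 as [C2 [V2 [D2 [[C21 [V21 _]] [C22 [V22 _]]]]]].
  split.
  - exists e. split; auto. intros u v _ Hu Hv.
    destruct (Dg u v (conj Hu Hv)), (D1 u v (conj Hu Hv)), (D2 u v (conj Hu Hv)).
    repeat split; auto.
  - pose proof inbox_center.
    repeat split; apply lim_inside_of_cont2; auto;
      match goal with V : (_ <= _)%nat -> ?G |- ?G => apply V; lia end.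
Qed.

End FlatOnBox.

(** * The Cox-de Boor recursion near the ends of the knot vector *)

Lemma frac_eq_mult a b : frac a b = a * frac 1 b.
Proof. unfold frac. destruct (Req_EM_T b 0); [ring | field; auto]. Qed.

Lemma cdb_O t fi la i x : cdb t fi la 0 i x =
  if Rlt_dec (t i) (t (S i)) then
    (if andb (if Nat.eq_dec i fi then true else if Rle_dec (t i) x then true else false)
             (if Nat.eq_dec i la then true else if Rlt_dec x (t (S i)) then true else false)
     then 1 else 0) else 0.
Proof. reflexivity. Qed.

Lemma cdb_S t fi la q i x : cdb t fi la (S q) i x =
  frac (x - t i) (t (i + S q)%nat - t i) * cdb t fi la q i x
  + frac (t (i + S q + 1)%nat - x) (t (i + S q + 1)%nat - t (S i)) * cdb t fi la q (S i) x.
Proof. reflexivity. Qed.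

Section CoxDeBoorLeftEnd.

Variables (t : nat -> R) (fi la : nat) (h : R).
Hypothesis Hh : 0 < h.
Hypothesis Hfirst : forall k, (k <= fi)%nat -> t k = 0.
Hypothesis Hnext : t (S fi) = h.
Hypothesis Hinterior : forall k, (fi < k)%nat -> h <= t k.

Lemma cdb_vanish_below_first q : forall i x, (i + q < fi)%nat -> cdb t fi la q i x = 0.
Proof.
  induction q as [|q IH]; intros i x Hi.
  - rewrite cdb_O, (Hfirst i), (Hfirst (S i)) by lia. destruct (Rlt_dec 0 0); [lra | auto].
  - rewrite cdb_S, !IH by lia. ring.
Qed.

Lemma cdb_vanish_left q : forall i x, (fi < i)%nat -> x < h -> cdb t fi la q i x = 0.
Proof.
  induction q as [|q IH]; intros i x Hi Hx.
  - rewrite cdb_O. destruct (Rlt_dec _ _); auto.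
    destruct (Nat.eq_dec i fi); [lia |].
    destruct (Rle_dec (t i) x); [specialize (Hinterior i Hi); lra | auto].
  - rewrite cdb_S, !IH by (auto; lia). ring.
Qed.

Hypothesis Hla : la <> fi.

Lemma cdb_first_span x : x < h -> cdb t fi la 0 fi x = 1.
Proof.
  intros Hx. rewrite cdb_O, Hfirst, Hnext by lia. destruct (Rlt_dec 0 h); [| lra].
  destruct (Nat.eq_dec fi fi); [| lia]. destruct (Nat.eq_dec fi la); [lia |].
  destruct (Rlt_dec x h); [auto | lra].
Qed.

Lemma cdb_left_factor q : forall i, exists g, is_poly g /\
  forall x, x < h -> cdb t fi la q i x = x ^ (i + q - fi) * g x.
Proof.
  induction q as [|q IH]; intros i.
  - destruct (lt_eq_lt_dec i fi) as [[Hi | ->] | Hi].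
    + exists (fun _ => 0). split; [apply poly_const |]. intros.
      rewrite cdb_vanish_below_first by lia. ring.
    + exists (fun _ => 1). split; [apply poly_const |]. intros x Hx.
      rewrite cdb_first_span by auto. replace (fi + 0 - fi)%nat with 0%nat by lia. ring.
    + exists (fun _ => 0). split; [apply poly_const |]. intros.
      rewrite cdb_vanish_left by auto. ring.
  - destruct (le_lt_dec i fi) as [Hi | Hi].
    2: { exists (fun _ => 0). split; [apply poly_const |]. intros.
         rewrite cdb_vanish_left by auto. ring. }
    destruct (IH i) as [g1 [P1 E1]], (IH (S i)) as [g2 [P2 E2]].
    set (c1 := frac 1 (t (i + S q)%nat - t i)).
    set (c2 := frac 1 (t (i + S q + 1)%nat - t (S i))).
    set (T := t (i + S q + 1)%nat).
    assert (P2' : is_poly (fun x => c2 * (T - x) * g2 x)).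
    { apply (poly_mult (fun x => c2 * (T - x))); auto.
      apply (poly_ext (fun x => - c2 * x + c2 * T)); [apply poly_affine | intros; ring]. }
    destruct (le_lt_dec fi (i + q)) as [Hq | Hq].
    + exists (fun x => c1 * g1 x + c2 * (T - x) * g2 x).
      split; [apply poly_plus; [apply poly_scal |]; auto |].
      intros x Hx. rewrite cdb_S, E1, E2 by auto.
      rewrite (frac_eq_mult (x - t i)), (frac_eq_mult (T - x)). fold c1 c2 T. rewrite (Hfirst i Hi).
      replace (i + S q - fi)%nat with (S (i + q - fi)) by lia.
      replace (S i + q - fi)%nat with (S (i + q - fi)) by lia.
      simpl. ring.
    + exists (fun x => c2 * (T - x) * g2 x). split; auto.
      intros x Hx. rewrite cdb_S, E2, (cdb_vanish_below_first q i x) by (auto; lia).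
      rewrite (frac_eq_mult (T - x)). fold c2 T.
      replace (S i + q - fi)%nat with (i + S q - fi)%nat by lia. ring.
Qed.

Lemma cdb_left_edge q : forall k x, (k + q = fi)%nat -> x < h ->
  cdb t fi la q k x = ((h - x) / h) ^ q.
Proof.
  induction q as [|q IH]; intros k x Hk Hx.
  - replace k with fi by lia. rewrite cdb_first_span by auto. reflexivity.
  - rewrite cdb_S, (cdb_vanish_below_first q k x), (IH (S k)) by (auto; lia).
    replace (k + S q + 1)%nat with (S fi) by lia. rewrite Hnext, (Hfirst (S k)) by lia.
    unfold frac. destruct (Req_EM_T (h - 0) 0); [lra |]. simpl. field. lra.
Qed.

Lemma cdb_left_next q : forall k, (1 <= q)%nat -> (k + q = S fi)%nat ->
  exists g, is_poly g /\ g 0 = INR q / h /\ forall x, x < h -> cdb t fi la q k x = x * g x.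
Proof.
  induction q as [|q IH]; intros k Hq Hk; [lia |].
  set (T := t (S (S fi))). assert (HT : h <= T) by (apply Hinterior; lia).
  destruct q as [|q].
  - exists (fun _ => / h). split; [apply poly_const |]. split; [simpl; field; lra |].
    intros x Hx. replace k with fi by lia.
    rewrite cdb_S, (cdb_vanish_left 0 (S fi)), (cdb_left_edge 0 fi x), Hfirst by (auto; lia).
    replace (fi + 1)%nat with (S fi) by lia. rewrite Hnext.
    unfold frac. destruct (Req_EM_T (h - 0) 0); [lra |]. simpl. field. lra.
  - destruct (IH (S k)) as [g2 [P2 [V2 E2]]]; try lia.
    exists (fun x => / h * ((h - x) / h) ^ S q + (T - x) / T * g2 x). split; [| split].
    + apply poly_plus; [apply poly_scal, poly_pow |].
      * apply (poly_ext (fun x => (- / h) * x + h / h)); [apply poly_affine |].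
        intros; unfold Rdiv; ring.
      * apply (poly_mult (fun x => (T - x) / T)); auto.
        apply (poly_ext (fun x => (- / T) * x + T / T)); [apply poly_affine |].
        intros; unfold Rdiv; ring.
    + rewrite V2. replace ((h - 0) / h) with 1 by (field; lra). rewrite pow1, !S_INR. field. lra.
    + intros x Hx.
      rewrite cdb_S, E2, (cdb_left_edge (S q) k x), (Hfirst k), (Hfirst (S k)) by (auto; lia).
      replace (k + S (S q))%nat with (S fi) by lia. rewrite Hnext.
      replace (S fi + 1)%nat with (S (S fi)) by lia. fold T.
      unfold frac. destruct (Req_EM_T (h - 0) 0); [lra |]. destruct (Req_EM_T (T - 0) 0); [lra |].
      field. lra.
Qed.

End CoxDeBoorLeftEnd.

Section CoxDeBoorRightEnd.

Variables (t : nat -> R) (fi la : nat).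
Hypothesis Hafter : forall k, (S la <= k)%nat -> t k = 1.
Hypothesis Hbelow : forall k, (k <= la)%nat -> t k <= t la.
Hypothesis Hlast : t la < 1.

Lemma cdb_vanish_right q : forall i x, (i + q < la)%nat -> t la < x -> cdb t fi la q i x = 0.
Proof.
  induction q as [|q IH]; intros i x Hi Hx.
  - rewrite cdb_O. destruct (Rlt_dec _ _); auto.
    destruct (Nat.eq_dec i la); [lia |].
    destruct (Rlt_dec x (t (S i))); [specialize (Hbelow (S i) ltac:(lia)); lra |].
    rewrite Bool.andb_false_r. auto.
  - rewrite cdb_S, !IH by (auto; lia). ring.
Qed.

Lemma cdb_vanish_after_last q : forall i x, (la < i)%nat -> cdb t fi la q i x = 0.
Proof.
  induction q as [|q IH]; intros i x Hi.
  - rewrite cdb_O, (Hafter i), (Hafter (S i)) by lia. destruct (Rlt_dec 1 1); [lra | auto].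
  - rewrite cdb_S, !IH by lia. ring.
Qed.

Hypothesis Hfi : fi <> la.

Lemma cdb_right_factor q : forall i, (i <= la)%nat -> exists g, is_poly g /\
  forall x, t la < x -> cdb t fi la q i x = (x - 1) ^ (la - i) * g x.
Proof.
  induction q as [|q IH]; intros i Hi.
  - destruct (le_lt_eq_dec i la Hi) as [Hl | ->].
    + exists (fun _ => 0). split; [apply poly_const |]. intros.
      rewrite cdb_vanish_right by (auto; lia). ring.
    + exists (fun _ => 1). split; [apply poly_const |]. intros x Hx.
      rewrite cdb_O, (Hafter (S la)) by lia. destruct (Rlt_dec (t la) 1); [| lra].
      destruct (Nat.eq_dec la fi); [lia |]. destruct (Rle_dec (t la) x); [| lra].
      destruct (Nat.eq_dec la la); [| lia]. simpl. replace (la - la)%nat with 0%nat by lia. ring.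
  - destruct (IH i Hi) as [g1 [P1 E1]].
    set (c1 := frac 1 (t (i + S q)%nat - t i)).
    set (c2 := frac 1 (t (i + S q + 1)%nat - t (S i))).
    assert (P1' : is_poly (fun x => (x - t i) * c1 * g1 x)).
    { apply poly_mult; auto.
      apply (poly_ext (fun x => c1 * x + (- t i * c1))); [apply poly_affine | intros; ring]. }
    assert (Hrest : (la < S i)%nat \/ (i + S q < la)%nat \/ (la <= i + S q /\ S i <= la)%nat)
      by lia.
    destruct Hrest as [Hrest | [Hrest | [Hq Hl]]].
    + exists (fun x => (x - t i) * c1 * g1 x). split; auto. intros x Hx.
      rewrite cdb_S, E1, (cdb_vanish_after_last q (S i)), (frac_eq_mult (x - t i)) by (auto; lia).
      fold c1. replace (la - i)%nat with 0%nat by lia. ring.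
    + exists (fun x => (x - t i) * c1 * g1 x). split; auto. intros x Hx.
      rewrite cdb_S, E1, (cdb_vanish_right q (S i) x), (frac_eq_mult (x - t i)) by (auto; lia).
      fold c1. ring.
    + destruct (IH (S i)) as [g2 [P2 E2]]; [lia |].
      exists (fun x => (x - t i) * c1 * g1 x + - c2 * g2 x).
      split; [apply poly_plus; [| apply poly_scal]; auto |].
      intros x Hx. rewrite cdb_S, E1, E2 by auto.
      rewrite (frac_eq_mult (x - t i)), (frac_eq_mult (t _ - x)). fold c1 c2.
      rewrite (Hafter (i + S q + 1)%nat) by lia.
      replace (la - i)%nat with (S (la - S i)) by lia. simpl. ring.
Qed.

End CoxDeBoorRightEnd.

(** * B-splines of S(p, r, 1/n) near 0 and 1 *)

Section MeshSize.

Variable n : nat.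
Hypothesis Hn : (2 <= n)%nat.

Lemma INR_pos_of_2_le : 0 < INR n.
Proof. apply lt_0_INR. lia. Qed.

Lemma hmesh_pos : 0 < hmesh n.
Proof. apply Rinv_0_lt_compat, INR_pos_of_2_le. Qed.

Lemma hmesh_le_1 : hmesh n <= 1.
Proof.
  unfold hmesh. rewrite <- Rinv_1. apply Rinv_le_contravar; [lra |].
  replace 1 with (INR 1) by reflexivity. apply le_INR. lia.
Qed.

End MeshSize.

Section UniformKnots.

Variables p r n : nat.

Lemma knot_le_degree k : (k <= p)%nat -> knot p r n k = 0.
Proof. intros Hk. unfold knot. rewrite (proj2 (Nat.leb_le k p) Hk). reflexivity. Qed.

Lemma knot_interior k : (p < k)%nat -> (k < p + 1 + (n - 1) * (p - r))%nat ->
  knot p r n k = INR ((k - (p + 1)) / (p - r) + 1) * hmesh n.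
Proof.
  intros H1 H2. unfold knot.
  rewrite (proj2 (Nat.leb_gt k p) H1), (proj2 (Nat.ltb_lt _ _) H2). reflexivity.
Qed.

Lemma knot_after_last_span k : (S (last_span p r n) <= k)%nat -> knot p r n k = 1.
Proof.
  unfold last_span. intros Hk. unfold knot.
  rewrite (proj2 (Nat.leb_gt k p)), (proj2 (Nat.ltb_ge k _)) by nia. reflexivity.
Qed.

Lemma bspline_after_last i x : (last_span p r n < i)%nat -> bspline p r n i x = 0.
Proof. apply cdb_vanish_after_last, knot_after_last_span. Qed.

Hypothesis Hr : (r < p)%nat.
Hypothesis Hn : (2 <= n)%nat.

Lemma knot_first_interior : knot p r n (S p) = hmesh n.
Proof.
  rewrite knot_interior by nia. replace (S p - (p + 1))%nat with 0%nat by lia.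
  rewrite Nat.Div0.div_0_l. simpl. ring.
Qed.

Lemma knot_ge_hmesh k : (p < k)%nat -> hmesh n <= knot p r n k.
Proof.
  intros Hk. pose proof (hmesh_pos n Hn). destruct (le_lt_dec (S (last_span p r n)) k).
  - rewrite knot_after_last_span by auto. apply hmesh_le_1, Hn.
  - unfold last_span in *. rewrite knot_interior by lia.
    rewrite <- (Rmult_1_l (hmesh n)) at 1. apply Rmult_le_compat_r; [lra |].
    replace 1 with (INR 1) by reflexivity. apply le_INR. lia.
Qed.

Lemma degree_lt_last_span : (p < last_span p r n)%nat.
Proof. unfold last_span. nia. Qed.

Lemma knot_last_span : knot p r n (last_span p r n) = 1 - hmesh n.
Proof.
  pose proof INR_pos_of_2_le n Hn. unfold last_span. rewrite knot_interior by nia.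
  replace ((p + (n - 1) * (p - r) - (p + 1)) / (p - r) + 1)%nat with (n - 1)%nat.
  - rewrite minus_INR by lia. unfold hmesh. simpl. field. lra.
  - replace (p + (n - 1) * (p - r) - (p + 1))%nat with ((n - 2) * (p - r) + (p - r - 1))%nat by nia.
    rewrite <- (Nat.div_unique _ (p - r) (n - 2) (p - r - 1)); lia.
Qed.

Lemma knot_le_last_span k :
  (k <= last_span p r n)%nat -> knot p r n k <= knot p r n (last_span p r n).
Proof.
  intros Hk. pose proof (hmesh_pos n Hn). destruct (le_lt_dec k p).
  - rewrite knot_le_degree, knot_last_span by auto. pose proof (hmesh_le_1 n Hn). lra.
  - pose proof degree_lt_last_span. unfold last_span in *. rewrite !knot_interior by nia.
    apply Rmult_le_compat_r; [lra |].
    apply le_INR, Nat.add_le_mono_r, Nat.Div0.div_le_mono; lia.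
Qed.

Lemma bspline_near0_factor i : exists g, is_poly g /\
  forall x, x < hmesh n -> bspline p r n i x = x ^ i * g x.
Proof.
  pose proof degree_lt_last_span.
  destruct (cdb_left_factor (knot p r n) p (last_span p r n) (hmesh n) (hmesh_pos n Hn)
              knot_le_degree knot_first_interior knot_ge_hmesh ltac:(lia) p i) as [g [P E]].
  exists g. split; auto. intros x Hx. unfold bspline. rewrite E by auto.
  replace (i + p - p)%nat with i by lia. reflexivity.
Qed.

Lemma bspline_near1_factor i : (i <= last_span p r n)%nat -> exists g, is_poly g /\
  forall x, 1 - hmesh n < x -> bspline p r n i x = (x - 1) ^ (last_span p r n - i) * g x.
Proof.
  intros Hi. pose proof (hmesh_pos n Hn). pose proof degree_lt_last_span.
  assert (Hlast : knot p r n (last_span p r n) < 1) by (rewrite knot_last_span; lra).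
  destruct (cdb_right_factor (knot p r n) p (last_span p r n) knot_after_last_span
              knot_le_last_span Hlast ltac:(lia) p i Hi) as [g [P E]].
  exists g. split; auto. intros x Hx. unfold bspline. apply E. rewrite knot_last_span. exact Hx.
Qed.

Lemma bspline_first_near0 x : x < hmesh n -> bspline p r n 0 x = ((hmesh n - x) / hmesh n) ^ p.
Proof.
  pose proof degree_lt_last_span. intros Hx.
  apply (cdb_left_edge _ _ _ _ (hmesh_pos n Hn) knot_le_degree knot_first_interior); auto; lia.
Qed.

Lemma bspline_second_near0 : exists g, is_poly g /\ g 0 = INR p / hmesh n /\
  forall x, x < hmesh n -> bspline p r n 1 x = x * g x.
Proof.
  pose proof degree_lt_last_span.
  apply (cdb_left_next _ _ _ _ (hmesh_pos n Hn) knot_le_degree knot_first_interior knot_ge_hmesh);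
    lia.
Qed.

End UniformKnots.

(** * The patch functions f[b+, b-] *)

Section EndDerivatives.

Variables p r n : nat.
Hypothesis Hr : (r < p)%nat.
Hypothesis Hn : (2 <= n)%nat.

Lemma locally_below_hmesh : locally 0 (fun s => s < hmesh n).
Proof.
  apply (locally_of_radius 0 (hmesh n)); [apply hmesh_pos, Hn |].
  intros t Ht. rewrite Rminus_0_r in Ht. pose proof (Rle_abs t). lra.
Qed.

Lemma Bsp1_at0 : Bsp p r n 1 0 = 1 /\ is_derive (Bsp p r n 1) 0 (- INR p / hmesh n).
Proof.
  pose proof (hmesh_pos n Hn). split.
  - unfold Bsp. simpl. rewrite bspline_first_near0 by (auto; lra).
    replace ((hmesh n - 0) / hmesh n) with 1 by (field; lra). apply pow1.
  - apply (is_derive_ext_loc (fun x => ((hmesh n - x) / hmesh n) ^ p)).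
    + apply (filter_imp _ _ (fun x Hx => eq_sym (bspline_first_near0 p r n Hr Hn x Hx))).
      apply locally_below_hmesh.
    + replace (- INR p / hmesh n) with (INR p * (- / hmesh n) * ((hmesh n - 0) / hmesh n) ^ pred p).
      * apply (is_derive_pow (fun x => (hmesh n - x) / hmesh n)). auto_derive; [auto | field; lra].
      * replace ((hmesh n - 0) / hmesh n) with 1 by (field; lra). rewrite pow1. field. lra.
Qed.

Lemma Bsp2_at0 : Bsp p r n 2 0 = 0 /\ is_derive (Bsp p r n 2) 0 (INR p / hmesh n).
Proof.
  pose proof (hmesh_pos n Hn).
  destruct (bspline_second_near0 p r n Hr Hn) as [g [Pg [Vg Eg]]]. split.
  - unfold Bsp. simpl. rewrite Eg by lra. ring.
  - apply (is_derive_ext_loc (fun x => x * g x)).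
    + apply (filter_imp _ _ (fun x Hx => eq_sym (Eg x Hx))), locally_below_hmesh.
    + rewrite <- Vg. replace (g 0) with (1 * g 0 + 0 * Derive g 0) by ring.
      apply is_derive_Rmult; [apply is_derive_Rid | apply poly_is_derive, Pg].
Qed.

End EndDerivatives.

Lemma fpatch_trace p r n alpha beta bp bm v : (r < p)%nat -> (2 <= n)%nat ->
  fpatch p r n alpha beta bp bm 0 v = bp v.
Proof.
  intros Hr Hn. unfold fpatch.
  rewrite (proj1 (Bsp1_at0 p r n Hr Hn)), (proj1 (Bsp2_at0 p r n Hr Hn)). ring.
Qed.

Lemma fpatch_d1_at0 p r n alpha beta bp bm v : (r < p)%nat -> (1 <= p)%nat -> (2 <= n)%nat ->
  Defs.d1 (fpatch p r n alpha beta bp bm) 0 v = alpha v * bm v + beta v * Derive bp v.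
Proof.
  intros Hr Hp Hn. pose proof (hmesh_pos n Hn). assert (0 < INR p) by (apply lt_0_INR; lia).
  set (K := alpha v * bm v + beta v * Derive bp v).
  assert (D : is_derive (fun s => fpatch p r n alpha beta bp bm s v) 0
    (bp v * (- INR p / hmesh n + INR p / hmesh n) + K * (hmesh n / INR p) * (INR p / hmesh n))).
  { unfold fpatch. fold K.
    apply is_derive_Rplus; apply is_derive_scal;
      [apply is_derive_Rplus; [apply Bsp1_at0 | apply Bsp2_at0] | apply Bsp2_at0]; auto. }
  unfold Defs.d1. apply (eq_trans (is_derive_unique _ _ _ D)). fold K. field. lra.
Qed.

Lemma fpatch_normal_derivative p r n alpha beta bp bm v :
  (r < p)%nat -> (1 <= p)%nat -> (2 <= n)%nat ->
  alpha v <> 0 -> Dnormal alpha beta (fpatch p r n alpha beta bp bm) v = - bm v.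
Proof.
  intros Hr Hp Hn Ha. unfold Dnormal. rewrite fpatch_d1_at0 by auto.
  unfold Defs.d2. rewrite (Derive_ext (fun s => fpatch p r n alpha beta bp bm 0 s) bp)
    by (intros; apply fpatch_trace; auto).
  field. exact Ha.
Qed.

Definition near (n : nat) (c x : R) : Prop := Rabs (x - c) < hmesh n.

Lemma near0_lt n x : near n 0 x -> x < hmesh n.
Proof. unfold near. rewrite Rminus_0_r. pose proof (Rle_abs x). lra. Qed.

Lemma near1_gt n x : near n 1 x -> 1 - hmesh n < x.
Proof. unfold near. intros Hx. apply Rabs_def2 in Hx. lra. Qed.

Lemma bspline_near_end p r n i c k : (r < p)%nat -> (2 <= n)%nat -> (c = 0 \/ c = 1) ->
  (c = 0 -> (k <= i)%nat) ->
  (c = 1 -> (i <= last_span p r n)%nat -> (k + i <= last_span p r n)%nat) ->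
  exists g, is_poly g /\ forall x, near n c x -> bspline p r n i x = (x - c) ^ k * g x.
Proof.
  intros Hr Hn [-> | ->] H0 H1.
  - destruct (bspline_near0_factor p r n Hr Hn i) as [g [Pg Eg]].
    exists (fun x => (x - 0) ^ (i - k) * g x). split; [apply poly_shift_pow_mult, Pg |].
    intros x Hx. rewrite Eg by (apply near0_lt, Hx).
    rewrite Rminus_0_r, <- Rmult_assoc, <- pow_add. f_equal. f_equal. specialize (H0 eq_refl). lia.
  - destruct (le_lt_dec i (last_span p r n)) as [Hi | Hi].
    + destruct (bspline_near1_factor p r n Hr Hn i Hi) as [g [Pg Eg]].
      exists (fun x => (x - 1) ^ (last_span p r n - i - k) * g x).
      split; [apply poly_shift_pow_mult, Pg |].
      intros x Hx. rewrite Eg by (apply near1_gt, Hx).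
      rewrite <- Rmult_assoc, <- pow_add. f_equal. f_equal. specialize (H1 eq_refl Hi). lia.
    + exists (fun _ => 0). split; [apply poly_const |].
      intros. rewrite bspline_after_last by auto. ring.
Qed.

Lemma inS_poly_near_end p r n c F :
  (r < p)%nat -> (2 <= n)%nat -> (c = 0 \/ c = 1) -> inS p r n F ->
  exists g, is_poly g /\ forall x, near n c x -> F x = g x.
Proof.
  intros Hr Hn Hc [coef Hcoef].
  assert (Hsum : forall N, exists g, is_poly g /\
            forall x, near n c x -> rsum N (fun i => coef i * bspline p r n i x) = g x).
  { induction N as [|N [g [Pg Eg]]].
    - exists (fun _ => 0). split; [apply poly_const | auto].
    - destruct (bspline_near_end p r n N c 0 Hr Hn Hc) as [b [Pb Eb]]; [lia | lia |].
      exists (fun x => g x + coef N * ((x - c) ^ 0 * b x)).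
      split; [apply poly_plus, poly_scal, poly_shift_pow_mult; auto |].
      intros x Hx. simpl rsum. rewrite Eg, Eb by auto. reflexivity. }
  destruct (Hsum (dimS p r n)) as [g [Pg Eg]].
  exists g. split; auto. intros x Hx. rewrite Hcoef. apply Eg, Hx.
Qed.

Lemma dimS_last_span p r n : dimS p r n = S (last_span p r n).
Proof. unfold dimS, last_span. lia. Qed.

Lemma Bsp_near_end p r n j c k : (r < p)%nat -> (2 <= n)%nat -> (1 <= j)%nat -> (c = 0 \/ c = 1) ->
  (c = 0 -> (k < j)%nat) -> (c = 1 -> (k + j <= dimS p r n)%nat) ->
  exists g, is_poly g /\ forall x, near n c x -> Bsp p r n j x = (x - c) ^ k * g x.
Proof.
  intros Hr Hn Hj Hc H0 H1. rewrite dimS_last_span in H1.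
  apply bspline_near_end; auto.
  - intros E. specialize (H0 E). destruct j; simpl; lia.
  - intros E _. specialize (H1 E). destruct j; simpl; lia.
Qed.

Definition separable_at (n : nat) (f : R -> R -> R) (c1 c2 : R) : Prop :=
  exists A B P Q, is_poly A /\ is_poly B /\ is_poly P /\ is_poly Q /\
    zero_of_order 1 B c1 /\ zero_of_order 3 P c2 /\ zero_of_order 2 Q c2 /\
    forall u v, near n c1 u -> near n c2 v -> f u v = A u * P v + B u * Q v.

Lemma vanish2_of_separable n f c1 c2 x0 y0 e G1 G2 S : 0 < e -> separable_at n f c1 c2 ->
  flat x0 y0 e 2 0 G1 -> flat x0 y0 e 2 0 G2 -> G1 x0 y0 = c1 -> G2 x0 y0 = c2 ->
  (forall x y, inbox x0 y0 e x y -> near n c1 (G1 x y) /\ near n c2 (G2 x y)) ->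
  vanish2_inside S (fun x y => f (G1 x y) (G2 x y)) x0 y0.
Proof.
  intros He [A [B [P [Q [PA [PB [PP [PQ [ZB [ZP [ZQ Ef]]]]]]]]]]] F1 F2 E1 E2 Hnear.
  apply (vanish2_inside_of_flat x0 y0 e He).
  apply (flat_ext x0 y0 e He 2 3
    (fun x y => A (G1 x y) * P (G2 x y) + B (G1 x y) * Q (G2 x y))).
  { intros x y Hxy. destruct (Hnear x y Hxy). rewrite Ef; auto. }
  subst c1 c2. apply flat_plus; auto.
  - apply (flat_mult _ _ _ He 2 0 3); apply flat_poly_comp; simpl; auto.
  - apply (flat_mult _ _ _ He 2 1 2); apply flat_poly_comp; auto.
Qed.

Lemma vanish2_inside_of_separable n f c1 c2 S : (2 <= n)%nat -> separable_at n f c1 c2 ->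
  vanish2_inside S f c1 c2.
Proof.
  intros Hn Hf. pose proof (hmesh_pos n Hn).
  apply (vanish2_of_separable n f c1 c2 c1 c2 (hmesh n) (fun u _ => u) (fun _ v => v)); auto.
  apply flat_fst; auto. apply flat_snd; auto.
Qed.

Lemma vanish2_inside_of_separable_param n f c1 c2 F1 F2 G1 G2 S : (2 <= n)%nat ->
  separable_at n f c1 c2 -> closed_sq c1 c2 -> regular_param F1 F2 G1 G2 ->
  vanish2_inside S (fun x y => f (G1 x y) (G2 x y)) (F1 c1 c2) (F2 c1 c2).
Proof.
  intros Hn Hf Hc [_ [[V [HV [HFV [CG1 CG2]]]] HGF]].
  pose proof (hmesh_pos n Hn) as Hh.
  destruct (HGF c1 c2 Hc) as [E1 E2]. specialize (HFV c1 c2 Hc).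
  destruct (HV _ _ HFV) as [e0 [He0 Ho]].
  destruct (CG1 _ _ HFV) as [_ [_ [_ [_ [_ [_ [C1 _]]]]]]].
  destruct (CG2 _ _ HFV) as [_ [_ [_ [_ [_ [_ [C2 _]]]]]]].
  destruct (C1 (hmesh n) Hh) as [d1 [Hd1 D1]], (C2 (hmesh n) Hh) as [d2 [Hd2 D2]].
  set (e := Rmin e0 (Rmin d1 d2)).
  assert (He : 0 < e) by (apply Rmin_glb_lt; [| apply Rmin_glb_lt]; auto).
  pose proof (Rmin_l e0 (Rmin d1 d2)). pose proof (Rmin_r e0 (Rmin d1 d2)).
  pose proof (Rmin_l d1 d2). pose proof (Rmin_r d1 d2).
  assert (HboxV : forall x y, inbox (F1 c1 c2) (F2 c1 c2) e x y -> V x y).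
  { intros x y [Bx By]. apply Ho; unfold e in *; lra. }
  apply (vanish2_of_separable n f c1 c2 _ _ e); auto.
  - apply (flat_of_C2_on _ _ _ V); auto.
  - apply (flat_of_C2_on _ _ _ V); auto.
  - intros x y [Bx By]. unfold near.
    split; [rewrite <- E1; apply D1 | rewrite <- E2; apply D2]; unfold e in *; lra.
Qed.

Lemma corners_closed_sq c1 c2 : (c1 = 0 \/ c1 = 1) -> (c2 = 0 \/ c2 = 1) -> closed_sq c1 c2.
Proof. unfold closed_sq. intros [-> | ->] [-> | ->]; lra. Qed.

Lemma corner_vanishing_of_separable n f : (2 <= n)%nat ->
  (forall c1 c2, (c1 = 0 \/ c1 = 1) -> (c2 = 0 \/ c2 = 1) -> separable_at n f c1 c2) ->
  at_corners (vanish2_inside open_sq f)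
  /\ (forall F1 F2 G1 G2 : R -> R -> R, regular_param F1 F2 G1 G2 ->
        at_corners (fun c1 c2 => vanish2_inside (phys_inside F1 F2)
          (fun x y => f (G1 x y) (G2 x y)) (F1 c1 c2) (F2 c1 c2))).
Proof.
  intros Hn Hf. split.
  - split; [| split; [| split]]; apply (vanish2_inside_of_separable n); auto.
  - intros F1 F2 G1 G2 HF.
    split; [| split; [| split]];
      apply (vanish2_inside_of_separable_param n); auto; apply corners_closed_sq; auto.
Qed.

Lemma first_two_Bsp_near_corner p r n c : (r < p)%nat -> (2 <= n)%nat -> (c = 0 \/ c = 1) ->
  exists A B, is_poly A /\ is_poly B /\ zero_of_order 1 B c /\
    forall u, near n c u -> Bsp p r n 1 u + Bsp p r n 2 u = A u /\ Bsp p r n 2 u = B u.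
Proof.
  intros Hr Hn Hc. assert (HN : (3 <= dimS p r n)%nat) by (unfold dimS; nia).
  destruct (Bsp_near_end p r n 1 c 0 Hr Hn) as [g1 [P1 E1]]; auto; try lia.
  destruct (Bsp_near_end p r n 2 c 0 Hr Hn) as [g2 [P2 E2]]; auto; try lia.
  destruct (Bsp_near_end p r n 2 c 1 Hr Hn) as [b [Pb Eb]]; auto; try lia.
  exists (fun u => (u - c) ^ 0 * g1 u + (u - c) ^ 0 * g2 u), (fun u => (u - c) ^ 1 * b u).
  split; [apply poly_plus; apply poly_shift_pow_mult; auto |].
  split; [apply poly_shift_pow_mult; auto |].
  split; [apply zero_of_order_shift_pow; auto |].
  intros u Hu. split; [rewrite E1, E2 | rewrite Eb]; auto.
Qed.

Lemma fpatch_separable p r n alpha beta bp bm c1 c2 : (r < p)%nat -> (2 <= n)%nat ->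
  (c1 = 0 \/ c1 = 1) ->
  (exists P Q, is_poly P /\ is_poly Q /\ zero_of_order 3 P c2 /\ zero_of_order 2 Q c2 /\
     forall v, near n c2 v -> bp v = P v /\
       (alpha v * bm v + beta v * Derive bp v) * (hmesh n / INR p) = Q v) ->
  separable_at n (fpatch p r n alpha beta bp bm) c1 c2.
Proof.
  intros Hr Hn Hc1 [P [Q [PP [PQ [ZP [ZQ EPQ]]]]]].
  destruct (first_two_Bsp_near_corner p r n c1 Hr Hn Hc1) as [A [B [PA [PB [ZB EAB]]]]].
  exists A, B, P, Q. do 7 (split; [assumption |]).
  intros u v Hu Hv. destruct (EAB u Hu) as [EA EB], (EPQ v Hv) as [EP EQ].
  unfold fpatch. rewrite <- EA, <- EB, <- EP, <- EQ. ring.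
Qed.

Lemma trace_bump_flat_near_end p n pt rt alpha beta j c : (2 <= p)%nat -> (2 <= n)%nat ->
  (rt < pt)%nat -> inS pt rt n beta -> (4 <= j <= dimS p (p - 1) n - 4)%nat -> (c = 0 \/ c = 1) ->
  exists P Q, is_poly P /\ is_poly Q /\ zero_of_order 3 P c /\ zero_of_order 2 Q c /\
    forall v, near n c v -> Bsp p (p - 1) n j v = P v /\
      (alpha v * 0 + beta v * Derive (Bsp p (p - 1) n j) v) * (hmesh n / INR p) = Q v.
Proof.
  intros Hp Hn Hrt Hbeta Hj Hc.
  destruct (Bsp_near_end p (p - 1) n j c 3) as [g [Pg Eg]]; auto; try lia.
  destruct (inS_poly_near_end pt rt n c beta Hrt Hn Hc Hbeta) as [gb [Pb Eb]].
  set (g' := fun v => INR 3 * g v + (v - c) * Derive g v).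
  assert (Pg' : is_poly g').
  { apply poly_plus; [apply poly_scal, Pg |].
    apply (poly_ext (fun v => (v - c) ^ 1 * Derive g v)); [| intros; ring].
    apply poly_shift_pow_mult, poly_Derive, Pg. }
  exists (fun v => (v - c) ^ 3 * g v), (fun v => (v - c) ^ 2 * (gb v * g' v * (hmesh n / INR p))).
  do 2 (split; [apply poly_shift_pow_mult; repeat apply poly_mult; auto; apply poly_const |]).
  split; [apply zero_of_order_shift_pow; auto |].
  split; [apply zero_of_order_shift_pow; repeat apply poly_mult; auto; apply poly_const |].
  intros v Hv. split; [apply Eg, Hv |].
  rewrite (Derive_ext_loc _ (fun v => (v - c) ^ 3 * g v)).
  - rewrite Derive_shift_pow_mult, Eb by (auto; lia). unfold g'. simpl. ring.
  - apply (filter_imp _ _ (fun s Hs => Eg s Hs)), locally_in_ball, Hv.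
Qed.

Lemma normal_bump_flat_near_end p n pt rt alpha beta j c : (2 <= p)%nat -> (2 <= n)%nat ->
  (rt < pt)%nat -> inS pt rt n alpha -> (3 <= j <= dimS (p - 1) (p - 2) n - 3)%nat ->
  (c = 0 \/ c = 1) ->
  exists P Q, is_poly P /\ is_poly Q /\ zero_of_order 3 P c /\ zero_of_order 2 Q c /\
    forall v, near n c v -> 0 = P v /\
      (alpha v * Bsp (p - 1) (p - 2) n j v + beta v * Derive (fun _ => 0) v) * (hmesh n / INR p)
      = Q v.
Proof.
  intros Hp Hn Hrt Halpha Hj Hc.
  destruct (Bsp_near_end (p - 1) (p - 2) n j c 2) as [g [Pg Eg]]; auto; try lia.
  destruct (inS_poly_near_end pt rt n c alpha Hrt Hn Hc Halpha) as [ga [Pa Ea]].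
  exists (fun v => (v - c) ^ 3 * 0), (fun v => (v - c) ^ 2 * (ga v * g v * (hmesh n / INR p))).
  do 2 (split; [apply poly_shift_pow_mult; repeat apply poly_mult; auto; apply poly_const |]).
  split; [apply zero_of_order_shift_pow; auto; apply poly_const |].
  split; [apply zero_of_order_shift_pow; repeat apply poly_mult; auto; apply poly_const |].
  intros v Hv. split; [ring |].
  rewrite Derive_const, Eg, Ea by auto. ring.
Qed.

Theorem mainTheorem2 (p r n pt rt : nat) (alpha beta : R -> R)
  (Hp : (2 <= p)%nat) (Hr1 : (1 <= r)%nat) (Hr2 : (r <= p - 1)%nat) (Hn : (2 <= n)%nat)
  (Hpt : (1 <= pt)%nat) (Hrt : (rt < pt)%nat)
  (Halpha : inS pt rt n alpha) (Hbeta : inS pt rt n beta)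
  (Halpha0 : forall v, 0 <= v <= 1 -> alpha v <> 0) :
  (forall bp bm : R -> R, inS p (p - 1) n bp -> inS (p - 1) (p - 2) n bm ->
     forall v, 0 <= v <= 1 ->
       fpatch p r n alpha beta bp bm 0 v = bp v /\
       Dnormal alpha beta (fpatch p r n alpha beta bp bm) v = - bm v)
  /\
  (forall f : R -> R -> R,
     ((exists j, (4 <= j <= dimS p (p - 1) n - 4)%nat /\
                 f = fpatch p r n alpha beta (Bsp p (p - 1) n j) (fun _ => 0))
      \/ (exists j, (3 <= j <= dimS (p - 1) (p - 2) n - 3)%nat /\
                 f = fpatch p r n alpha beta (fun _ => 0) (Bsp (p - 1) (p - 2) n j))) ->
     at_corners (vanish2_inside open_sq f)
     /\ (forall F1 F2 G1 G2 : R -> R -> R, regular_param F1 F2 G1 G2 ->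
           at_corners (fun c1 c2 =>
             vanish2_inside (phys_inside F1 F2)
               (fun x y => f (G1 x y) (G2 x y)) (F1 c1 c2) (F2 c1 c2)))).
Proof.
  assert (Hr : (r < p)%nat) by lia.
  split.
  - intros bp bm _ _ v Hv. split.
    + apply fpatch_trace; auto.
    + apply fpatch_normal_derivative; [exact Hr | lia | exact Hn | apply Halpha0, Hv].
  - intros f [[j [Hj ->]] | [j [Hj ->]]];
      apply (corner_vanishing_of_separable n); auto; intros c1 c2 Hc1 Hc2;
      apply fpatch_separable; auto.
    + apply (trace_bump_flat_near_end p n pt rt); auto.
    + apply (normal_bump_flat_near_end p n pt rt); auto.
Qed.
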